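(* Let $\pi$ be a permutation and suppose $\pi$ contains an occurrence of the pattern $j_3$ whose underlying classical pattern is $43251$, with shaded boxes $\{(1,4),(1,5),(2,4),(2,5)\}$ and marked region $\{(2,3)\}$. Then the entries of this occurrence playing roles $1,2,3,4$ form, in the same roles, an occurrence in $S(\pi)$ of the mesh pattern $W_2=(3241,\{(1,4)\})$.
   Context: Permutations are in one-line notation. For a sequence $w$ of distinct integers, the stack-sort $S(w)$ is defined by $S(\varepsilon)=\varepsilon$ and $S(\alpha m\beta)=S(\alpha)S(\beta)m$ where $m$ is the largest entry of $w$. An occurrence of a classical pattern $p$ of length $k$ in a permutation $\sigma$ of length $n$ is a set of entries at positions $i_1<\dots<i_k$ whose values are order-isomorphic to $p$; the entry corresponding to letter $r$ of $p$ plays role $r$. With values $v_1<\dots<v_k$ of the occurrence and $i_0=v_0=0$, $i_{k+1}=v_{k+1}=n+1$, the box $(a,b)$ ($0\le a,b\le k$) is the set of entries $\sigma(x)$ with $i_a<x<i_{a+1}$, $v_b<\sigma(x)<v_{b+1}$. A pattern with shaded boxes $R$ and marked region $M$ occurs when an occurrence of the underlying classical pattern has every box in $R$ empty and the union of the boxes in $M$ contains at least one entry; a mesh pattern $(p,R)$ has no marked region. *)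

From mathcomp Require Import all_boot.
Set Implicit Arguments. Unset Strict Implicit. Unset Printing Implicit Defensive.

Definition is_perm (s : seq nat) : Prop := perm_eq s (iota 1 (size s)).

Fixpoint ssort_fuel (f : nat) (s : seq nat) : seq nat :=
  match f with
  | 0 => [::]
  | f'.+1 =>
    if s is [::] then [::] else
    let m := foldr maxn 0 s in
    let i := index m s in
    ssort_fuel f' (take i s) ++ ssort_fuel f' (drop i.+1 s) ++ [:: m]
  end.
Definition stack_sort (s : seq nat) : seq nat := ssort_fuel (size s) s.

(* 1-indexed access: s(x) *)
Definition at_ (s : seq nat) (x : nat) : nat := nth 0 s x.-1.

(* I = positions i_1 < ... < i_k (1-indexed) of an occurrence of the
   classical pattern p (one-line notation) in s *)
Definition is_occ (s p I : seq nat) : Prop :=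
  [/\ size I = size p, sorted ltn I, all (fun i => 0 < i <= size s) I &
      forall r t, r < size p -> t < size p ->
        (at_ s (nth 0 I r) < at_ s (nth 0 I t)) = (nth 0 p r < nth 0 p t)].

(* i_a with i_0 = 0, i_{k+1} = n+1 *)
Definition ipos (s I : seq nat) (a : nat) : nat :=
  if a == 0 then 0 else if a == (size I).+1 then (size s).+1 else nth 0 I a.-1.

(* v_b (b-th smallest value of the occurrence) with v_0 = 0, v_{k+1} = n+1 *)
Definition ival (s I : seq nat) (b : nat) : nat :=
  if b == 0 then 0 else if b == (size I).+1 then (size s).+1
  else nth 0 (sort leq [seq at_ s i | i <- I]) b.-1.

Definition in_box (s I : seq nat) (ab : nat * nat) (x : nat) : bool :=
  (ipos s I ab.1 < x < ipos s I ab.1.+1) &&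
  (ival s I ab.2 < at_ s x < ival s I ab.2.+1).

Definition box_nonempty (s I : seq nat) (ab : nat * nat) : bool :=
  has (in_box s I ab) (iota 1 (size s)).

Definition mesh_occ (s p : seq nat) (R : seq (nat * nat)) (I : seq nat) : Prop :=
  is_occ s p I /\ all (fun ab => ~~ box_nonempty s I ab) R.

Definition marked_mesh_occ (s p : seq nat) (R M : seq (nat * nat)) (I : seq nat)
  : Prop :=
  mesh_occ s p R I /\ has (box_nonempty s I) M.

Definition role_entry (s p I : seq nat) (r : nat) : nat :=
  at_ s (nth 0 I (index r p)).

From mathcomp Require Import all_boot zify.

(* Stack sort outputs s_i before s_j (i < j) exactly when some entry at a
   position in (i, j] exceeds s_i; this follows by induction along the
   recursion S(alpha m beta) = S(alpha) S(beta) m, the maximum m separating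
   the two halves.  Write the occurrence as a b c d e at positions
   p1 < ... < p5, so that e < c < b < a < d.  The marked entry above b between
   b and c outputs b before c, the shading (nothing above a strictly between
   a and c) outputs c before a, and d outputs a before e: hence b c a e is a
   3241 in S(pi).  No z > a is output between b and c: if z lies left of a,
   either a larger entry follows z up to a, and then z precedes b, or none
   does, and then a precedes z although z precedes c and c precedes a;
   between a and c, z would lie in a shaded box; right of c, c precedes z. *)

Definition seg (s : seq nat) i j := drop i.+1 (take j.+1 s).

Lemma segP (P : pred nat) (s : seq nat) i j : j < size s ->
  reflect (exists2 k, i < k <= j & P (nth 0 s k)) (has P (seg s i j)).
Proof.
move=> js; apply: (iffP hasP) => [[z zs Pz] | [k ik Pk]].
  case/(nthP 0): zs Pz => t; rewrite /seg size_drop (size_takel js) => lt <-.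
  rewrite nth_drop nth_take; last by lia.
  by exists (i.+1 + t) => //; lia.
exists (nth 0 s k) => //; have -> : nth 0 s k = nth 0 (seg s i j) (k - i.+1).
  by rewrite /seg nth_drop nth_take subnKC //; lia.
by apply: mem_nth; rewrite /seg size_drop (size_takel js); lia.
Qed.
Arguments segP {P s i j}.

Lemma foldr_maxn_mem (s : seq nat) : s != [::] -> foldr maxn 0 s \in s.
Proof.
elim: s => // x s IH _ /=; rewrite inE.
have [-> | /IH ms] := eqVneq s [::]; first by rewrite maxn0 eqxx.
by rewrite /maxn; case: ltnP; rewrite ?ms ?orbT ?eqxx.
Qed.

Lemma leq_foldr_maxn (s : seq nat) z : z \in s -> z <= foldr maxn 0 s.
Proof. by rewrite foldrE => zs; apply: (leq_bigmax_seq z). Qed.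

Lemma ssort_fuel_split f (s : seq nat) : s != [::] ->
  exists al be m, [/\ s = al ++ m :: be, {in s, forall z, z <= m},
    size al < size s, size be < size s &
    ssort_fuel f.+1 s = ssort_fuel f al ++ ssort_fuel f be ++ [:: m]].
Proof.
move=> ne; set m := foldr maxn 0 s; set p := index m s.
have pl : p < size s by rewrite index_mem foldr_maxn_mem.
have def : s = take p s ++ m :: drop p.+1 s.
  by rewrite -{1}(cat_take_drop p s) (drop_nth 0 pl) nth_index ?foldr_maxn_mem.
exists (take p s), (drop p.+1 s), m; split => //.
- by move=> z; apply: leq_foldr_maxn.
- by rewrite size_take pl.
- by rewrite size_drop; lia.
- by clear def pl; rewrite {}/p {}/m; case: s ne.
Qed.

Lemma ssort_fuel_perm f (s : seq nat) : size s <= f -> perm_eq (ssort_fuel f s) s.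
Proof.
elim: f s => [|f IH] s hs; first by case: s hs.
have [-> // | /(ssort_fuel_split f) [al [be [m [def _ ha hb ->]]]]] := eqVneq s [::].
have IHal : size al <= f by rewrite -ltnS (leq_trans ha).
have IHbe : size be <= f by rewrite -ltnS (leq_trans hb).
rewrite [X in perm_eq _ X]def; apply: perm_cat; first exact: IH.
by rewrite cats1 perm_rcons perm_cons IH.
Qed.

Definition ssort_rule (s S : seq nat) := forall i j, i < j < size s ->
  (index (nth 0 s i) S < index (nth 0 s j) S) = has (fun z => nth 0 s i < z) (seg s i j).

Lemma seg_cat_r (al be : seq nat) m i j :
  seg (al ++ m :: be) (size al + i.+1) (size al + j.+1) = seg be i j.
Proof.
rewrite /seg take_cat ltnNge -!addnS leq_addr /= addKn.
by rewrite drop_cat ltnNge leq_addr /= addKn.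
Qed.

Section SsortRuleCat.

Variables (al be Sa Sb : seq nat) (m : nat).
Hypotheses (s_uniq : uniq (al ++ m :: be)) (le_m : {in al ++ m :: be, forall z, z <= m}).
Hypotheses (pa : perm_eq Sa al) (pb : perm_eq Sb be).
Hypotheses (ruleA : ssort_rule al Sa) (ruleB : ssort_rule be Sb).

Local Notation s := (al ++ m :: be).
Local Notation S := (Sa ++ Sb ++ [:: m]).

Let notin_al z : z \in m :: be -> z \notin al.
Proof.
move: s_uniq; rewrite cat_uniq => /and3P [_ /hasPn dis _] zb.
by apply/negP => za; move: (dis z zb); rewrite za.
Qed.

Let m_notin_be : m \notin be.
Proof. by move: s_uniq; rewrite cat_uniq => /and3P [_ _ /andP []]. Qed.

Let index_al z : z \in al -> index z S = index z Sa.
Proof. by move=> za; rewrite index_cat (perm_mem pa) za. Qed.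

Let index_be z : z \in be -> index z S = size Sa + index z Sb.
Proof.
move=> zb; have zmb : z \in m :: be by rewrite inE zb orbT.
by rewrite index_cat (perm_mem pa) (negbTE (notin_al _ zmb)) index_cat (perm_mem pb) zb.
Qed.

Let index_m : index m S = size Sa + size Sb.
Proof.
rewrite index_cat (perm_mem pa) (negbTE (notin_al _ (mem_head m be))).
by rewrite index_cat (perm_mem pb) (negbTE m_notin_be) /= eqxx addn0.
Qed.

Let rule_cat_ll i j : i < j < size al ->
  (index (nth 0 s i) S < index (nth 0 s j) S) = has (fun z => nth 0 s i < z) (seg s i j).
Proof.
case/andP=> ij ja; have ia := ltn_trans ij ja.
rewrite !nth_cat ia ja !index_al ?mem_nth // ruleA ?ij //.
by rewrite /seg takel_cat.
Qed.

Let rule_cat_lr i j : i < size al <= j -> j < size s ->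
  (index (nth 0 s i) S < index (nth 0 s j) S) = has (fun z => nth 0 s i < z) (seg s i j).
Proof.
case/andP=> ia aj js; rewrite !nth_cat ia (ltnNge j) aj /=.
have xa : nth 0 al i \in al by exact: mem_nth.
have y_mbe : nth 0 (m :: be) (j - size al) \in m :: be.
  by apply: mem_nth; move: js; rewrite size_cat /=; lia.
have -> : index (nth 0 al i) S < index (nth 0 (m :: be) (j - size al)) S.
  rewrite index_al // index_cat (perm_mem pa) (negbTE (notin_al _ y_mbe)).
  by apply: leq_trans (leq_addr _ _); rewrite index_mem (perm_mem pa).
symmetry; apply/(segP js); exists (size al); first by rewrite ia aj.
rewrite nth_cat ltnn subnn /= ltn_neqAle le_m ?mem_cat ?xa // andbT.
by apply: contraNneq (notin_al _ (mem_head m be)) => <-.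
Qed.

Let nth_m : nth 0 s (size al) = m.
Proof. by rewrite nth_cat ltnn subnn. Qed.

Let nth_be j : nth 0 s (size al + j.+1) = nth 0 be j.
Proof. by rewrite nth_cat ltnNge leq_addr /= addKn. Qed.

Let rule_cat_mr j : j < size be ->
  (index (nth 0 s (size al)) S < index (nth 0 s (size al + j.+1)) S) =
  has (fun z => nth 0 s (size al) < z) (seg s (size al) (size al + j.+1)).
Proof.
move=> jb; have yb : nth 0 be j \in be by exact: mem_nth.
rewrite nth_m nth_be index_m index_be // ltn_add2l ltnNge ltnW ?index_mem ?(perm_mem pb) //.
by apply/esym/negbTE/hasPn => z /mem_drop /mem_take /le_m; rewrite leqNgt.
Qed.

Let rule_cat_rr i j : i < j < size be ->
  (index (nth 0 s (size al + i.+1)) S < index (nth 0 s (size al + j.+1)) S) =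
  has (fun z => nth 0 s (size al + i.+1) < z) (seg s (size al + i.+1) (size al + j.+1)).
Proof.
case/andP=> ij jb; have ib := ltn_trans ij jb.
by rewrite !nth_be !index_be ?mem_nth // ltn_add2l seg_cat_r ruleB ?ij.
Qed.

Lemma ssort_rule_cat : ssort_rule s S.
Proof.
move=> i j /andP [ij js].
have [ja | aj] := ltnP j (size al); first by apply: rule_cat_ll; rewrite ij ja.
have [ia | ai] := ltnP i (size al); first by apply: rule_cat_lr; rewrite ?ia.
have jb : j - size al - 1 < size be.
  by move: js; rewrite size_cat /=; lia.
have ej : j = size al + (j - size al - 1).+1 by move: ij ai; lia.
rewrite ej; have [-> | ne_ai] := eqVneq i (size al); first exact: rule_cat_mr.
have ei : i = size al + (i - size al - 1).+1 by move: ai ne_ai; lia.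
rewrite ei; apply: rule_cat_rr; rewrite jb andbT.
by move: ij; rewrite {1}ei {1}ej ltn_add2l ltnS.
Qed.

End SsortRuleCat.

Lemma ssort_fuel_rule f (s : seq nat) : size s <= f -> uniq s -> ssort_rule s (ssort_fuel f s).
Proof.
elim: f s => [|f IH] s hs us; first by case: s hs us => // _ _ i j; rewrite andbF.
have [-> i j | /(ssort_fuel_split f) [al [be [m [def le_m ha hb ->]]]]] := eqVneq s [::].
  by rewrite andbF.
have IHal : size al <= f by rewrite -ltnS (leq_trans ha).
have IHbe : size be <= f by rewrite -ltnS (leq_trans hb).
move: us le_m; rewrite def => us le_m.
have ua : uniq al by move: us; rewrite cat_uniq => /and3P [].
have ub : uniq be by move: us; rewrite cat_uniq => /and3P [_ _ /andP []].
by apply: ssort_rule_cat; rewrite ?ssort_fuel_perm //; apply: IH.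
Qed.

Lemma stack_sort_perm (s : seq nat) : perm_eq (stack_sort s) s.
Proof. exact: ssort_fuel_perm. Qed.

Lemma stack_sort_rule (s : seq nat) : uniq s -> ssort_rule s (stack_sort s).
Proof. exact: ssort_fuel_rule. Qed.
Arguments stack_sort_rule {s}.

Lemma stack_sort_after (s : seq nat) i j : uniq s -> i < j < size s ->
  (index (nth 0 s j) (stack_sort s) < index (nth 0 s i) (stack_sort s)) =
  ~~ has (fun z => nth 0 s i < z) (seg s i j).
Proof.
move=> us /andP [ij js]; have i_lt := ltn_trans ij js.
have mem_S k : k < size s -> nth 0 s k \in stack_sort s.
  by move=> ks; rewrite (perm_mem (stack_sort_perm s)) mem_nth.
rewrite -stack_sort_rule ?ij // ltn_neqAle -leqNgt.
rewrite (inj_in_eq (@index_inj _ 0 (stack_sort s))) ?mem_S //.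
by rewrite nth_uniq // eq_sym (ltn_eqF ij).
Qed.
Arguments stack_sort_after {s i j}.

Lemma at_index_succ (S : seq nat) z : z \in S -> at_ S (index z S).+1 = z.
Proof. exact: nth_index. Qed.

Lemma sort_leq_eq (s t : seq nat) : sorted leq t -> perm_eq s t -> sort leq s = t.
Proof.
move=> st pst; apply: (sorted_eq leq_trans anti_leq) => //.
  exact: (sort_sorted leq_total).
by rewrite perm_sort.
Qed.

Lemma map_at_index (S vs : seq nat) : all (mem S) vs ->
  [seq at_ S i | i <- [seq (index v S).+1 | v <- vs]] = vs.
Proof.
move=> /allP vsS; rewrite -map_comp -[RHS]map_id.
by apply/eq_in_map => v /vsS; apply: at_index_succ.
Qed.
Arguments map_at_index {S vs}.

Lemma is_occ_index (S p vs : seq nat) :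
  size vs = size p -> all (mem S) vs -> sorted ltn [seq index v S | v <- vs] ->
  (forall r t, r < size p -> t < size p ->
     (nth 0 vs r < nth 0 vs t) = (nth 0 p r < nth 0 p t)) ->
  is_occ S p [seq (index v S).+1 | v <- vs].
Proof.
move=> szp vsS srt cmp; split.
- by rewrite size_map.
- by move: srt; rewrite !sorted_map.
- by rewrite all_map; apply/allP => v /(allP vsS) vS /=; rewrite index_mem.
- move=> r t rp tp; rewrite -cmp // -!(nth_map 0 0 (at_ S)) ?size_map ?szp //.
  by rewrite map_at_index.
Qed.

Section J3Occurrence.

Variables (pi : seq nat) (p1 p2 p3 p4 p5 : nat).

(* 0-based positions p_i; the occurrence lists the 1-based ones. *)
Local Notation I := [:: p1.+1; p2.+1; p3.+1; p4.+1; p5.+1].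
Local Notation a := (nth 0 pi p1).
Local Notation b := (nth 0 pi p2).
Local Notation c := (nth 0 pi p3).
Local Notation d := (nth 0 pi p4).
Local Notation e := (nth 0 pi p5).

Hypothesis pi_perm : is_perm pi.
Hypothesis I_occ : is_occ pi [:: 4; 3; 2; 5; 1] I.
Hypothesis I_shaded :
  all (fun ab => ~~ box_nonempty pi I ab) [:: (1, 4); (1, 5); (2, 4); (2, 5)].
Hypothesis I_marked : has (box_nonempty pi I) [:: (2, 3)].

Lemma j3_positions : [/\ p1 < p2, p2 < p3, p3 < p4, p4 < p5 & p5 < size pi].
Proof.
by case: I_occ => _ /= /and4P [? ? ? /andP [? _]] /and5P [_ _ _ _ /andP [? _]] _.
Qed.

Lemma j3_values : [/\ e < c, c < b, b < a & a < d].
Proof.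
case: I_occ => _ _ _ cmp.
by split; [move: (cmp 4 2) | move: (cmp 2 1) | move: (cmp 1 0) | move: (cmp 0 3)];
  rewrite /at_ /= => ->.
Qed.

Lemma j3_sorted_values : sort leq [seq at_ pi i | i <- I] = [:: e; c; b; a; d].
Proof.
have [ec cb ba ad] := j3_values; apply: sort_leq_eq.
  by rewrite /= (ltnW ec) (ltnW cb) (ltnW ba) (ltnW ad).
by apply/permP => P; rewrite /at_ /=; lia.
Qed.

Lemma pi_uniq : uniq pi.
Proof. by rewrite (perm_uniq pi_perm) iota_uniq. Qed.

Lemma j3_shaded k : p1 < k < p3 -> k < size pi -> nth 0 pi k <= a.
Proof.
move=> hk kn; rewrite leqNgt; apply/negP => ak.
have [h12 h23 h34 h45 h5] := j3_positions; have [ec cb ba ad] := j3_values.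
have k_in : k.+1 \in iota 1 (size pi) by rewrite mem_iota; lia.
have z_le : nth 0 pi k <= size pi.
  by have := mem_nth 0 kn; rewrite (perm_mem pi_perm) mem_iota add1n ltnS => /andP [_].
have zd : nth 0 pi k != d.
  case/andP: hk => _ k3; rewrite nth_uniq ?pi_uniq ?(ltn_trans h45 h5) //.
  by rewrite ltn_eqF // (ltn_trans k3 h34).
have k2 : k != p2 by apply: contraTneq ak => ->; rewrite -leqNgt ltnW.
move: I_shaded => /and4P [/hasPn s14 /hasPn s15 /hasPn s24 /andP [/hasPn s25 _]].
move: (s14 _ k_in) (s15 _ k_in) (s24 _ k_in) (s25 _ k_in).
rewrite /in_box /ipos /ival j3_sorted_values /at_ /=; lia.
Qed.

Lemma j3_marked : exists2 x, p2 < x < p3 & b < nth 0 pi x.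
Proof.
move: I_marked => /= /orP [/hasP [x _] | //].
rewrite /in_box /ipos /ival j3_sorted_values /at_ /= => hx.
by exists x.-1; lia.
Qed.

Local Notation S := (stack_sort pi).

Lemma j3_before_bc : index b S < index c S.
Proof.
have [_ h23 h34 h45 h5] := j3_positions; have p3n : p3 < size pi by lia.
rewrite (stack_sort_rule pi_uniq) ?h23 //; apply/(segP p3n).
by have [x hx bx] := j3_marked; exists x; first lia.
Qed.

Lemma j3_before_ca : index c S < index a S.
Proof.
have [h12 h23 h34 h45 h5] := j3_positions; have [ec cb ba ad] := j3_values.
have p3n : p3 < size pi by lia.
rewrite (stack_sort_after pi_uniq); last lia.
apply/(segP p3n) => -[k /andP [k1]].
rewrite leq_eqVlt => /orP [/eqP -> | k3]; apply/negP; rewrite -leqNgt.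
  exact: ltnW (ltn_trans cb ba).
by apply: j3_shaded; lia.
Qed.

Lemma j3_before_ae : index a S < index e S.
Proof.
have [h12 h23 h34 h45 h5] := j3_positions; have [ec cb ba ad] := j3_values.
rewrite (stack_sort_rule pi_uniq); last lia.
by apply/(segP h5); exists p4; first lia.
Qed.

Lemma j3_box_empty k : k < size pi ->
  index b S < index (nth 0 pi k) S < index c S -> nth 0 pi k <= a.
Proof.
move=> kn /andP [bz zc]; rewrite leqNgt; apply/negP => az.
have [h12 h23 h34 h45 h5] := j3_positions; have [ec cb ba ad] := j3_values.
have [k1 | k1 | ek] := ltngtP k p1; last by rewrite ek ltnn in az.
  have p1n : p1 < size pi by lia.
  case hz : (has (fun w => nth 0 pi k < w) (seg pi k p1)).
    suff : index (nth 0 pi k) S < index b S by rewrite ltnNge ltnW.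
    move/(segP p1n): hz => [k' hk' zk']; rewrite (stack_sort_rule pi_uniq); last lia.
    by apply/(segP (ltn_trans h23 (ltn_trans h34 (ltn_trans h45 h5)))); exists k'; first lia.
  suff : index a S < index (nth 0 pi k) S by have := j3_before_ca; lia.
  by rewrite (stack_sort_after pi_uniq) ?hz //; lia.
have [k3 | k3 | ek] := ltngtP k p3.
- by move: az; rewrite ltnNge j3_shaded ?k1.
- suff : index c S < index (nth 0 pi k) S by rewrite ltnNge ltnW.
  by rewrite (stack_sort_rule pi_uniq) ?k3 //; apply/(segP kn); exists k; lia.
- by move: az; rewrite ek ltnNge ltnW // (ltn_trans cb ba).
Qed.

Lemma j3_W2_occurrence : exists J : seq nat,
  mesh_occ S [:: 3; 2; 4; 1] [:: (1, 4)] J /\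
  (forall r, 1 <= r <= 4 ->
     role_entry S [:: 3; 2; 4; 1] J r = role_entry pi [:: 4; 3; 2; 5; 1] I r).
Proof.
have [h12 h23 h34 h45 h5] := j3_positions; have [ec cb ba ad] := j3_values.
have memS k : k < size pi -> nth 0 pi k \in S.
  by move=> kn; rewrite (perm_mem (stack_sort_perm pi)) mem_nth.
have vsS : all (mem S) [:: b; c; a; e] by rewrite /= !memS //; lia.
have sortJ : sort leq [:: b; c; a; e] = [:: e; c; b; a].
  apply: sort_leq_eq; first by rewrite /= (ltnW ec) (ltnW cb) (ltnW ba).
  by apply/permP => P /=; lia.
exists [seq (index v S).+1 | v <- [:: b; c; a; e]]; split; first split.
- apply: is_occ_index => //; first by rewrite /= j3_before_bc j3_before_ca j3_before_ae.
  by move=> [|[|[|[|r]]]] [|[|[|[|t]]]] //= _ _; lia.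
- rewrite /= andbT; apply/hasPn => y _; apply/negP.
  rewrite /in_box /ipos /ival (map_at_index vsS) sortJ /=.
  move=> /andP [/andP [lb ub] /andP [ay _]].
  have cS : index c S < size S by rewrite index_mem memS //; lia.
  have yS : y.-1 < size S by lia.
  have uS : uniq S by rewrite (perm_uniq (stack_sort_perm pi)) pi_uniq.
  have iz : index (at_ S y) S = y.-1 by rewrite index_uniq.
  have zpi : at_ S y \in pi by rewrite -(perm_mem (stack_sort_perm pi)) mem_nth.
  move: (at_ S y) zpi iz ay => z zpi iz az.
  have := @j3_box_empty (index z pi); rewrite nth_index // index_mem zpi iz => le_za.
  by move: az; rewrite ltnNge le_za //; lia.
- by move=> [|[|[|[|[|r]]]]] //= _; rewrite /role_entry /= at_index_succ ?memS //; lia.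
Qed.

End J3Occurrence.

Theorem lemma3p6 (pi I : seq nat) :
  is_perm pi ->
  marked_mesh_occ pi [:: 4; 3; 2; 5; 1]
    [:: (1, 4); (1, 5); (2, 4); (2, 5)] [:: (2, 3)] I ->
  exists J : seq nat,
    mesh_occ (stack_sort pi) [:: 3; 2; 4; 1] [:: (1, 4)] J /\
    (forall r, 1 <= r <= 4 ->
       role_entry (stack_sort pi) [:: 3; 2; 4; 1] J r
       = role_entry pi [:: 4; 3; 2; 5; 1] I r).
Proof.
move=> pi_perm [[occ shaded] marked]; have [sz _ pos _] := occ.
case: I sz pos occ shaded marked => [|[|p1] [|[|p2] [|[|p3] [|[|p4] [|[|p5] [|? ?]]]]]] //=;
  rewrite ?andbF // => _ _.
exact: j3_W2_occurrence.
Qed.
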